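(* Let $p$ be a prime, $d\ge1$ an integer and $G\cong\mathbb{Z}_p^d$. Then for every non-empty subset $A$ of $]p-1[=\{1,\dots,p-1\}$, \[ d_A(G)\le\left\lceil\frac{d(p-1)+1}{|A|}\right\rceil . \]
   Context: For an integer $x\ge1$, $]x[=\{1,2,\dots,x\}$. Let $G$ be a finite abelian group (written additively) of exponent $n$ and let $\emptyset\ne A\subseteq\, ]n[$. The constant $d_A(G)$ is the least positive integer $t$ such that for every sequence $g_1,\dots,g_t$ of (not necessarily distinct) elements of $G$ there exist $\ell\ge1$, indices $1\le i_1<\dots<i_\ell\le t$ and elements $a_1,\dots,a_\ell\in A$ (repetitions allowed) with $\sum_{j=1}^{\ell}a_j g_{i_j}=0$ in $G$. $\lceil x\rceil$ denotes the smallest integer $\ge x$. *)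

From HB Require Import structures.
From mathcomp Require Import all_boot all_algebra.
From mathcomp Require Import boolp.
Set Implicit Arguments. Unset Strict Implicit. Unset Printing Implicit Defensive.
Import GRing.Theory.
Local Open Scope ring_scope.

Definition has_A_zero_sum (G : zmodType) (m : nat) (A : {set 'I_m})
  (t : nat) (g : t.-tuple G) : Prop :=
  exists I : {set 'I_t}, I != set0 /\
    exists a : 'I_t -> 'I_m, (forall i, i \in I -> a i \in A) /\
      \sum_(i in I) (tnth g i) *+ (val (a i)) = 0.

Definition dA_prop (G : zmodType) (m : nat) (A : {set 'I_m}) (t : nat) : Prop :=
  forall g : t.-tuple G, has_A_zero_sum A g.

Definition dA_pred (G : zmodType) (m : nat) (A : {set 'I_m}) : pred nat :=
  fun t => (0 < t)%N && `[< dA_prop G A t >].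

(* d_A(G): least positive t with dA_prop (0 if no such t exists, which
   never happens for finite G and nonempty A). *)
Definition dA (G : zmodType) (m : nat) (A : {set 'I_m}) : nat :=
  match pselect (exists t, dA_pred G A t) with
  | left H => ex_minn H
  | right _ => 0%N
  end.

(* Put r = {0} ∪ A ⊆ F_p and weights
   w(v) = 1 / prod_(u in r, u <> v) (v - u) on r.  For every polynomial P in
   t variables of total degree < t (|r| - 1) = t |A|, the weighted sum
   sum_(x in r^t) (prod_i w(x_i)) P(x) vanishes, since this already holds
   for monomials, one of whose exponents is then < |r| - 1.  Apply this to
   P(x) = prod_j (1 - (sum_i x_i g_i)_j ^ (p - 1)), of degree d (p - 1):
   by Fermat, P(x) is 1 if sum_i x_i g_i = 0 and 0 otherwise.  Since the
   origin contributes w(0)^t <> 0, some nonzero x in r^t has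
   sum_i x_i g_i = 0, and its support is an A-weighted zero-sum
   subsequence as soon as t |A| > d (p - 1). *)
From mathcomp Require Import all_boot all_algebra all_field.
From mathcomp Require Import mpoly zify boolp.
Set Implicit Arguments. Unset Strict Implicit. Unset Printing Implicit Defensive.
Import GRing.Theory.
Local Open Scope ring_scope.

Section LagrangeWeights.
Variable F : fieldType.

Lemma size_prod_XsubC_neq (r : seq F) (v : F) : v \in r -> uniq r ->
  size (\prod_(u <- r | u != v) ('X - u%:P)) = size r.
Proof.
move=> vr ur; rewrite -big_filter size_prod_XsubC size_filter.
have := count_predC (pred1 v) r; rewrite count_uniq_mem // vr add1n => <-.
by congr _.+1; apply: eq_count.
Qed.

(* The left-hand side is the leading coefficient of the Lagrange
   interpolant of X^e on r, which is X^e itself. *)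
Lemma sum_exp_div_prod_sub (r : seq F) (e : nat) :
  uniq r -> (e < (size r).-1)%N ->
  \sum_(v <- r) v ^+ e * (\prod_(u <- r | u != v) (v - u))^-1 = 0.
Proof.
move=> ur he.
pose c v := (\prod_(u <- r | u != v) (v - u))^-1.
pose q := \sum_(v <- r) (v ^+ e * c v) *: \prod_(u <- r | u != v) ('X - u%:P).
have size_q : (size q <= size r)%N.
  rewrite /q big_seq; apply: (big_ind (fun q : {poly F} => size q <= size r))%N.
  - by rewrite size_poly0.
  - by move=> x y hx hy; rewrite (leq_trans (size_polyD _ _)) // geq_max hx.
  by move=> v vr; rewrite (leq_trans (size_scale_leq _ _)) ?size_prod_XsubC_neq.
have q_interp z : z \in r -> q.[z] = z ^+ e.
  move=> zr; rewrite /q horner_sum (bigD1_seq z) //= [X in _ + X]big1_seq.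
    rewrite addr0 hornerZ horner_prod; under eq_bigr do rewrite hornerXsubC.
    rewrite -mulrA mulVf ?mulr1 // prodf_seq_neq0; apply/allP => u _.
    by rewrite subr_eq0 eq_sym implybb.
  move=> v /andP[vz _]; rewrite hornerZ horner_prod -big_filter.
  have zf : z \in [seq u <- r | u != v] by rewrite mem_filter eq_sym vz zr.
  by rewrite (bigD1_seq z) ?filter_uniq //= hornerXsubC subrr mul0r mulr0.
have q_Xn : q = 'X^e.
  apply/eqP; rewrite -subr_eq0; apply: contraT => nz.
  have roots : all (root (q - 'X^e)) r.
    by apply/allP => y yr; rewrite rootE !hornerE q_interp ?subrr.
  have := leq_trans (max_poly_roots nz roots ur) (size_polyD _ _).
  rewrite size_polyN size_polyXn leq_max ltnNge size_q /=; lia.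
have lead_q : q`_(size r).-1 = \sum_(v <- r) v ^+ e * c v.
  rewrite /q coef_sum; apply: eq_big_seq => v vr; rewrite coefZ.
  have /monicP := monic_prod_XsubC r (fun u => u != v) id.
  by rewrite lead_coefE size_prod_XsubC_neq // => ->; rewrite mulr1.
by rewrite -lead_q q_Xn coefXn gtn_eqF.
Qed.

End LagrangeWeights.

Section GridSums.
Variables (F : finFieldType) (r : seq F).
Hypothesis r_uniq : uniq r.

(* Outside the nodes the weight is [0], so sums over all of [F] (or over
   all of [F^t]) are really sums over the nodes (the grid [r^t]). *)
Definition node_weight (v : F) : F :=
  if v \in r then (\prod_(u <- r | u != v) (v - u))^-1 else 0.

Lemma node_weight_eq0 v : (node_weight v == 0) = (v \notin r).
Proof.
rewrite /node_weight; case: ifP => vr; last by rewrite eqxx.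
rewrite invr_eq0; apply/negbTE; rewrite prodf_seq_neq0; apply/allP => u _.
by rewrite subr_eq0 eq_sym implybb.
Qed.

Lemma sum_node_weight_exp e : (e < (size r).-1)%N ->
  \sum_(v : F) node_weight v * v ^+ e = 0.
Proof.
move=> he; rewrite -[RHS](sum_exp_div_prod_sub r_uniq he) (big_uniq _ r_uniq).
rewrite [RHS]big_mkcond; apply: eq_bigr => v _; rewrite /node_weight.
by case: (v \in r); rewrite ?mul0r // mulrC.
Qed.

Variable t : nat.

Lemma sum_grid_monomial (m : 'X_{1..t}) : (mdeg m < t * (size r).-1)%N ->
  \sum_(x : {ffun 'I_t -> F}) (\prod_i node_weight (x i)) * \prod_i x i ^+ m i
    = 0.
Proof.
move=> hm; have [i hi] : exists i, (m i < (size r).-1)%N.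
  apply/existsP; apply: contraLR hm; rewrite negb_exists -leqNgt mdegE.
  move=> /forallP all_ge.
  have: (\sum_(j < t) (size r).-1 <= \sum_j m j)%N.
    by apply: leq_sum => j _; rewrite leqNgt all_ge.
  by rewrite sum_nat_const card_ord.
under eq_bigr do rewrite -big_split /=.
rewrite -(bigA_distr_bigA (fun i v => node_weight v * v ^+ m i)) /=.
by rewrite (bigD1 i) //= sum_node_weight_exp // mul0r.
Qed.

Lemma sum_grid_mpoly (P : {mpoly F[t]}) : (msize P <= t * (size r).-1)%N ->
  \sum_(x : {ffun 'I_t -> F}) (\prod_i node_weight (x i)) * P.@[x] = 0.
Proof.
move=> hP; under eq_bigr do rewrite mevalE mulr_sumr.
rewrite exchange_big /= big_seq big1 // => m mP.
under eq_bigr do rewrite mulrCA.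
by rewrite -mulr_sumr sum_grid_monomial ?mulr0 // (leq_trans (msize_mdeg_lt mP)).
Qed.

End GridSums.

Section DegreeBounds.
Variables (R : idomainType) (n : nat).
Implicit Types (p q : {mpoly R[n]}).

Lemma msizeM_le_pred p q : (msize (p * q) <= (msize p + msize q).-1)%N.
Proof.
have [->|p0] := eqVneq p 0; first by rewrite mul0r msize0.
have [->|q0] := eqVneq q 0; first by rewrite mulr0 msize0.
by rewrite msizeM.
Qed.

Lemma msize_linear_form (c : 'I_n -> R) :
  (msize (\sum_(i < n) c i *: 'X_i) <= 2)%N.
Proof.
apply: (big_ind (fun q : {mpoly R[n]} => msize q <= 2)%N).
- by rewrite msize0.
- by move=> x y hx hy; rewrite (leq_trans (msizeD_le _ _)) // geq_max hx.
by move=> i _; rewrite (leq_trans (msizeZ_le _ _)) // msizeX mdeg1.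
Qed.

Lemma msize_prod_le (I : Type) (s : seq I) (P : I -> {mpoly R[n]}) k :
  (forall i, msize (P i) <= k.+1)%N ->
  (msize (\prod_(i <- s) P i) <= size s * k + 1)%N.
Proof.
move=> hP; elim: s => [|i s ih]; first by rewrite big_nil msize1.
rewrite big_cons (leq_trans (msizeM_le_pred _ _)) //.
by move: (hP i) ih => /=; lia.
Qed.

Lemma msizeX_le q k m : (msize q <= m.+1)%N -> (msize (q ^+ k) <= k * m + 1)%N.
Proof.
move=> hq; rewrite -[k in q ^+ k]subn0 -prodr_const_nat.
by rewrite (leq_trans (msize_prod_le _ (fun=> hq))) // size_iota subn0.
Qed.

End DegreeBounds.

Section WeightedZeroSums.
Variables (p : nat) (A : {set 'I_p}).
Hypotheses (p_pr : prime p) (A_pos : forall a, a \in A -> (0 < val a)%N).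

Lemma Fp_fermat (v : 'F_p) : v != 0 -> v ^+ (p - 1) = 1.
Proof.
move=> v0; apply: (mulIf v0); rewrite mul1r -exprSr subn1 prednK ?prime_gt0 //.
by rewrite -[X in v ^+ X](card_Fp p_pr) expf_card.
Qed.

Definition A_nodes : seq 'F_p := 0 :: [seq (val a)%:R | a <- enum A].

Lemma A_nodes_uniq : uniq A_nodes.
Proof.
have val_natr (a : 'I_p) : ((val a)%:R : 'F_p) = val a :> nat.
  by rewrite val_Fp_nat // modn_small ?ltn_ord.
rewrite /= map_inj_in_uniq ?enum_uniq ?andbT; last first.
  by move=> a b _ _ /(congr1 (@nat_of_ord _)); rewrite !val_natr => /val_inj.
apply/mapP => -[a]; rewrite mem_enum => aA /(congr1 (@nat_of_ord _)).
by rewrite val_natr => a0; move: (A_pos aA); rewrite -[val a]/(nat_of_ord a) -a0.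
Qed.

Lemma size_A_nodes : size A_nodes = #|A|.+1.
Proof. by rewrite /= size_map cardE. Qed.

Lemma A_nodesP v : v \in A_nodes -> v != 0 ->
  exists2 a, a \in A & (val a)%:R = v.
Proof.
rewrite inE => /orP[/eqP -> | /mapP[a]]; first by rewrite eqxx.
by rewrite mem_enum => aA ->; exists a.
Qed.

Lemma has_A_zero_sum_of_nodes (V : lmodType 'F_p) t (g : t.-tuple V)
    (x : 'I_t -> 'F_p) :
  (forall i, x i \in A_nodes) -> (exists i, x i != 0) ->
  \sum_i x i *: tnth g i = 0 -> has_A_zero_sum A g.
Proof.
move=> xA [i0 xi0] sum0.
pose a i := odflt (Ordinal (prime_gt0 p_pr)) [pick a in A | (val a)%:R == x i].
have aP i : x i != 0 -> a i \in A /\ (val (a i))%:R = x i.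
  move=> xi; rewrite /a; case: pickP => [b /andP[bA /eqP ->] | none] //=.
  have [b bA bx] := A_nodesP (xA i) xi.
  by move: (none b); rewrite bA bx eqxx.
exists [set i | x i != 0]; split; first by apply/set0Pn; exists i0; rewrite inE.
exists a; split; first by move=> i; rewrite inE => /aP[].
rewrite -[RHS]sum0 [RHS](bigID (fun i => x i != 0)) /= [X in _ + X]big1.
  rewrite addr0; apply: eq_big => i; first by rewrite inE.
  by rewrite inE => /aP[_ <-]; rewrite scaler_nat.
by move=> i /negPn/eqP ->; rewrite scale0r.
Qed.

Variables (d t : nat).

Definition chevalley_poly (g : t.-tuple 'rV['F_p]_d) : {mpoly 'F_p[t]} :=
  \prod_(j < d) (1 - (\sum_(i < t) tnth g i 0 j *: 'X_i) ^+ (p - 1)).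

Lemma msize_chevalley_poly g :
  (msize (chevalley_poly g) <= d * (p - 1) + 1)%N.
Proof.
apply: (leq_trans (msize_prod_le _ (k := (p - 1)%N) _)) => [j|]; last first.
  by rewrite [index_enum _]unlock -enumT size_enum_ord.
rewrite (leq_trans (msizeD_le _ _)) // msizeN msize1 geq_max /=.
by rewrite (leq_trans (msizeX_le _ (msize_linear_form _))) ?muln1 ?addn1.
Qed.

Lemma meval_chevalley_poly g (x : 'I_t -> 'F_p) :
  (chevalley_poly g).@[x] = (\sum_i x i *: tnth g i == 0)%:R.
Proof.
set v := \sum_i x i *: tnth g i.
have -> : (chevalley_poly g).@[x] = \prod_(j < d) (1 - v 0 j ^+ (p - 1)).
  rewrite rmorph_prod; apply: eq_bigr => j _.
  rewrite rmorphB rmorph1 rmorphXn raddf_sum summxE; congr (1 - _ ^+ _).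
  by apply: eq_bigr => i _; rewrite /= mevalZ mevalXU mxE mulrC.
have [-> | v0] := eqVneq v 0.
  by rewrite big1 // => j _; rewrite mxE expr0n subn_eq0 leqNgt prime_gt1 ?subr0.
have [j vj] : exists j, v 0 j != 0.
  apply/existsP; apply: contraNT v0 => /existsPn v0j.
  by apply/eqP/rowP => j; rewrite mxE; apply/eqP/negPn/v0j.
by rewrite (bigD1 j) //= Fp_fermat // subrr mul0r.
Qed.

Lemma has_A_zero_sum_long (g : t.-tuple 'rV['F_p]_d) :
  (d * (p - 1) < t * #|A|)%N -> has_A_zero_sum A g.
Proof.
move=> long; case: (pselect (has_A_zero_sum A g)) => // no_zero_sum.
pose W (x : {ffun 'I_t -> 'F_p}) := \prod_i node_weight A_nodes (x i).
have grid_sum : \sum_x W x * (chevalley_poly g).@[x] = 0.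
  apply: sum_grid_mpoly; first exact: A_nodes_uniq.
  by rewrite size_A_nodes (leq_trans (msize_chevalley_poly g)) // addn1.
have off_origin x : x != 0 -> W x * (chevalley_poly g).@[x] = 0.
  move=> x0; rewrite meval_chevalley_poly.
  have [sum0 | _] := eqVneq; last by rewrite mulr0.
  have [/forallP xA | /forallPn[i xi]] := boolP [forall i, x i \in A_nodes].
    suff: exists i, x i != 0 by move/(has_A_zero_sum_of_nodes xA)/(_ sum0).
    apply/existsP; apply: contraNT x0 => /existsPn x0i.
    by apply/eqP/ffunP => i; rewrite ffunE; apply/eqP/negPn/x0i.
  have /eqP w0 : node_weight A_nodes (x i) == 0 by rewrite node_weight_eq0.
  by rewrite /W (bigD1 i) //= w0 !mul0r.
move: grid_sum; rewrite (bigD1 (0 : {ffun _ -> _})) //= big1 => [|x /off_origin //].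
rewrite addr0 meval_chevalley_poly big1 => [|i _]; last by rewrite ffunE scale0r.
rewrite eqxx mulr1 /W; under eq_bigr do rewrite ffunE.
by rewrite prodr_const => /eqP; rewrite expf_eq0 node_weight_eq0 mem_head andbF.
Qed.

End WeightedZeroSums.

Lemma dA_le (G : zmodType) (m : nat) (A : {set 'I_m}) (t : nat) :
  (0 < t)%N -> dA_prop G A t -> (dA G A <= t)%N.
Proof.
move=> t_gt0 Ht; have At : dA_pred G A t by rewrite /dA_pred t_gt0; apply/asboolP.
rewrite /dA; case: pselect => [ex | /(_ (ex_intro _ t At))//].
by case: ex_minnP => n _; apply.
Qed.

Lemma ltn_ceil_mul n k : (0 < k)%N -> (n < (n + 1 + k - 1) %/ k * k)%N.
Proof.
move=> k_gt0; rewrite addnAC addnK divnDr ?dvdnn // divnn k_gt0 addn1.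
exact: ltn_ceil.
Qed.

Theorem corollary1p1 (p d : nat) (A : {set 'I_p}) :
  prime p -> (1 <= d)%N -> A != set0 -> (forall a, a \in A -> (0 < val a)%N) ->
  (dA 'rV['F_p]_d A <= ((d * (p - 1) + 1) + #|A| - 1) %/ #|A|)%N.
Proof.
move=> p_pr _; rewrite -card_gt0 => A_gt0 A_pos.
have long := ltn_ceil_mul (d * (p - 1)) A_gt0.
apply: dA_le => [|g]; last exact: has_A_zero_sum_long.
by move: long; rewrite lt0n; apply: contraTneq => ->.
Qed.
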